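(* Let $(G,+)$ be an abelian group with identity $0$. Let $M$ be a matroid over $G$ and let $N$ be a sparse paving matroid over $G$, both of the same rank $n$, such that $0\notin E(N)$. Assume further that one of the following holds: (1) $|E(M)|<\min\{|E(N)|-1,\,p(G)\}$; or (2) $E(M)$ is not a progression, $G$ is finite, $|E(M)|=|E(N)|-1$ and $|E(N)|<p(G)$; or (3) $E(M)$ is neither a progression nor a semi-progression, $G$ is finite and $|E(M)|=|E(N)|<p(G)$; or (4) $|E(M)|<|E(N)|-n-1$. Then $M$ is matched to $N$.
   Context: $p(G)$ denotes the smallest cardinality of a nonzero subgroup of $G$. A matroid over $G$ is a matroid $M$ whose finite ground set $E(M)$ is a subset of $G$; all matroids are assumed loopless. A matroid of rank $n$ is paving if every $(n-1)$-element subset of its ground set is independent; it is sparse paving if both it and its dual matroid are paving. A progression of length $k$ with difference $x$ and initial term $a$ ($x,a\in G$) is a set $\{a,a+x,\dots,a+(k-1)x\}$; a set $A$ is a semi-progression if $A\setminus\{a\}$ is a progression for some $a\in A$. For matroids $M,N$ over $G$ with $r(M)=r(N)=n>0$ and bases $\mathcal{M}=\{a_1,\dots,a_n\}$ of $M$ and $\mathcal{N}=\{b_1,\dots,b_n\}$ of $N$, $\mathcal{M}$ is matched to $\mathcal{N}$ if there is a permutation $\pi\in S_n$ with $a_i+b_{\pi(i)}\notin E(M)$ for all $i$. $M$ is matched to $N$ if for every basis $\mathcal{M}$ of $M$ there exists a basis $\mathcal{N}$ of $N$ such that $\mathcal{M}$ is matched to $\mathcal{N}$. *)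

From HB Require Import structures.
From mathcomp Require Import all_boot all_order all_algebra.
From mathcomp Require Import finmap.
Set Implicit Arguments. Unset Strict Implicit. Unset Printing Implicit Defensive.
Import GRing.Theory.
Local Open Scope fset_scope.
Local Open Scope ring_scope.

Record matroid_over (G : zmodType) := MatroidOver {
  ground : {fset G};
  indep : {fset G} -> Prop }.

Section Matroids.
Variable G : zmodType.
Implicit Types (M : matroid_over G) (I J S A B : {fset G}).

Definition is_matroid M : Prop :=
  [/\ indep M fset0,
      (forall I, indep M I -> I `<=` ground M),
      (forall I J, indep M J -> I `<=` J -> indep M I) &
      (forall I J, indep M I -> indep M J -> (#|` I| < #|` J|)%N ->
          exists2 x, x \in J `\` I & indep M (x |` I))].

Definition loopless M : Prop := forall x, x \in ground M -> indep M [fset x].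

Definition basis M B : Prop :=
  indep M B /\ (forall x, x \in ground M -> x \notin B -> ~ indep M (x |` B)).

Definition has_rank M (n : nat) : Prop := exists2 B, basis M B & #|` B| = n.

Definition dual M : matroid_over G :=
  MatroidOver (ground M)
    (fun I => I `<=` ground M /\ exists2 B, basis M B & [disjoint I & B]).

Definition paving M : Prop :=
  forall r, has_rank M r ->
  forall S, S `<=` ground M -> #|` S| = r.-1 -> indep M S.

Definition sparse_paving M : Prop := paving M /\ paving (dual M).

(* A basis A of M is matched to a basis B of N: there is a bijection
   f : A -> B (a permutation pi in S_n after enumerating A and B) with
   a + f a \notin E(M) for all a in A. *)
Definition basis_matched M A B : Prop :=
  exists f : G -> G,
    [/\ {in A &, injective f}, [fset f a | a in A] = B &
        forall a, a \in A -> a + f a \notin ground M].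

Definition matched M N : Prop :=
  forall A, basis M A -> exists2 B, basis N B & basis_matched M A B.

Definition is_progression A : Prop :=
  exists (k : nat) (a x : G),
    forall y, y \in A <-> exists2 i : nat, (i < k)%N & y = a + x *+ i.

Definition is_semi_progression A : Prop :=
  exists2 a, a \in A & is_progression (A `\ a).

(* "k < p(G)": every nonzero subgroup of G has more than k elements
   (only finite subgroups can violate this). *)
Definition is_subgroup (H : {fset G}) : Prop :=
  0 \in H /\ (forall x y, x \in H -> y \in H -> x - y \in H).

Definition lt_pG (k : nat) : Prop :=
  forall H : {fset G}, is_subgroup H -> H != [fset 0] -> (k < #|` H|)%N.

Definition finite_group : Prop := exists s : seq G, forall g : G, g \in s.

End Matroids.

From HB Require Import structures.
From mathcomp Require Import all_boot all_order all_algebra.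
From mathcomp Require Import finmap.
From mathcomp Require Import zify.
From Stdlib Require Import Classical.
Set Implicit Arguments. Unset Strict Implicit. Unset Printing Implicit Defensive.
Import GRing.Theory.
Local Open Scope fset_scope.
Local Open Scope ring_scope.

(* Fix a basis A of M and call b in E(N) a partner of a in A when
   a + b \notin E(M).  For X \subset A the set B = {0} \cup (E(N) \ partners(X))
   satisfies X + B \subset E(M), so a lower bound on |X + B| (Cauchy-Davenport,
   valid as nonzero subgroups of G are larger than the sets involved, or
   |X + B| >= |B| in case (4)) forces X to have at least |X| partners.  Hall's
   theorem then sends A injectively to partners f(A).  If f(A) is not a basis
   of N, a partner outside f(A) is swapped in by the basis exchange property of
   sparse paving matroids; if there is none, X = A meets the bound, and only
   with equality in case (3), where Vosper's theorem makes E(M) = A + B a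
   progression. *)

Lemma fset_two_mem (T : choiceType) (Z : {fset T}) :
  (1 < #|` Z|)%N -> exists x y, [/\ x \in Z, y \in Z & x != y].
Proof.
move=> Z2; have /fset0Pn[x xZ] : Z != fset0 by rewrite -cardfs_gt0 ltnW.
have /fset0Pn[y] : Z `\ x != fset0 by rewrite -cardfs_gt0; move: Z2; rewrite (cardfsD1 x) xZ.
by rewrite in_fsetD1 => /andP[yx yZ]; exists x, y; rewrite eq_sym.
Qed.

Lemma fset_mem_neq2 (T : choiceType) (Z : {fset T}) a b :
  (2 < #|` Z|)%N -> exists2 c, c \in Z & (c != a) && (c != b).
Proof.
move=> Z3; have /fset0Pn[c] : Z `\` [fset a; b] != fset0.
  rewrite -cardfs_gt0 cardfsD; have := fsubset_leq_card (fsubsetIr Z [fset a; b]).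
  by rewrite cardfs2; lia.
by rewrite in_fsetD in_fset2 negb_or => /andP[cab cZ]; exists c.
Qed.

(** * Sumsets and the Cauchy-Davenport theorem *)

Section Sumsets.
Variable G : zmodType.
Implicit Types (A B X Y : {fset G}) (a b d e g x y : G).

Definition sumset A B : {fset G} := [fset a + b | a in A, b in B].
Definition translate A e : {fset G} := [fset a + e | a in A].

Lemma sumsetP A B x :
  reflect (exists a b, [/\ a \in A, b \in B & x = a + b]) (x \in sumset A B).
Proof.
apply: (iffP (imfset2P _ _ _ _ _)) => [[a aA [b bB ->]]|[a [b [aA bB ->]]]].
  by exists a, b.
by exists a => //; exists b.
Qed.

Lemma mem_sumset A B a b : a \in A -> b \in B -> a + b \in sumset A B.
Proof. by move=> aA bB; apply/sumsetP; exists a, b. Qed.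

Lemma sumsetC A B : sumset A B = sumset B A.
Proof.
by apply/fsetP => x; apply/sumsetP/sumsetP => -[a [b [aA bB ->]]];
  exists b, a; rewrite addrC.
Qed.

Lemma sumsetS A A' B B' : A `<=` A' -> B `<=` B' -> sumset A B `<=` sumset A' B'.
Proof.
move=> /fsubsetP sAA' /fsubsetP sBB'; apply/fsubsetP => _ /sumsetP[a [b [aA bB ->]]].
by rewrite mem_sumset ?sAA' ?sBB'.
Qed.

Lemma translateE A e x : (x \in translate A e) = (x - e \in A).
Proof.
apply/imfsetP/idP => [[a aA ->]|xeA]; first by rewrite addrK.
by exists (x - e) => //; rewrite subrK.
Qed.

Lemma mem_translate A a e : a \in A -> a + e \in translate A e.
Proof. by move=> aA; rewrite translateE addrK. Qed.

Lemma card_translate A e : #|` translate A e| = #|` A|.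
Proof. by rewrite card_in_imfset //= => x y _ _; apply: addIr. Qed.

Lemma translateU A B e : translate (A `|` B) e = translate A e `|` translate B e.
Proof. exact: imfsetU. Qed.

Lemma translate_translate A d e : translate (translate A d) e = translate A (d + e).
Proof. by apply/fsetP => x; rewrite !translateE opprD addrA addrAC. Qed.

Lemma translate_sub_sumset A B b : b \in B -> translate A b `<=` sumset A B.
Proof.
move=> bB; apply/fsubsetP => x; rewrite translateE => xbA.
by rewrite -(subrK b x) mem_sumset.
Qed.

Lemma leq_card_sumset A B : B != fset0 -> (#|` A| <= #|` sumset A B|)%N.
Proof.
case/fset0Pn=> b bB; rewrite -(card_translate A b).
by rewrite fsubset_leq_card ?translate_sub_sumset.
Qed.

Lemma sumset2 A b1 b2 : sumset A [fset b1; b2] = translate A b1 `|` translate A b2.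
Proof.
apply/fsetP => x; rewrite in_fsetU !translateE.
apply/sumsetP/orP => [[a [b [aA]]]|[xA|xA]].
- by rewrite in_fset2 => /orP[]/eqP-> ->; rewrite addrK; [left|right].
- by exists (x - b1), b1; rewrite subrK in_fset2 eqxx.
- by exists (x - b2), b2; rewrite subrK in_fset2 eqxx orbT.
Qed.

Lemma lt_pGW k j : lt_pG G k -> (j <= k)%N -> lt_pG G j.
Proof. by move=> hk jk H sgH ntH; apply: leq_ltn_trans jk (hk H sgH ntH). Qed.

(* The periods of Y form a nonzero subgroup, and Y is a union of its cosets. *)
Lemma lt_pG_card_periodic k Y g :
  lt_pG G k -> g != 0 -> Y != fset0 -> translate Y g `<=` Y -> (k < #|` Y|)%N.
Proof.
move=> hk g0 /fset0Pn[y0 y0Y] Yg.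
have periodE h : translate Y h `<=` Y -> translate Y h = Y.
  by move=> Yh; apply/eqP; rewrite eqEfcard Yh card_translate /=.
pose H := [fset h in translate Y (- y0) | translate Y h `<=` Y].
have inH h : (h \in H) = (h + y0 \in Y) && (translate Y h `<=` Y).
  by rewrite !inE translateE opprK.
have sgH : is_subgroup H.
  split; first by rewrite inH add0r y0Y; apply/fsubsetP => x; rewrite translateE subr0.
  move=> x y; rewrite !inH => /andP[_ /periodE Yx] /andP[_ /periodE Yy].
  have addx z : z \in Y -> z + x \in Y by rewrite -{2}Yx translateE addrK.
  have suby z : z \in Y -> z - y \in Y by rewrite -{1}Yy translateE.
  rewrite addrAC (addrC x) suby ?addx //=; apply/fsubsetP => z.
  by rewrite translateE => /addx /suby; rewrite opprB addrA subrK addrK.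
have gH : g \in H by rewrite inH (addrC g) (fsubsetP Yg) // translateE addrK.
have ntH : H != [fset 0].
  by apply: contraNneq g0 => H0; move: gH; rewrite H0 => /fset1P->.
apply: leq_trans (hk H sgH ntH) _; rewrite -(card_translate Y (- y0)).
by apply: fsubset_leq_card; apply/fsubsetP => h; rewrite inE => /andP[].
Qed.

Lemma periodic_subset_eq0 A Y g :
  lt_pG G #|` A| -> Y `<=` A -> g != 0 -> translate Y g `<=` Y -> Y = fset0.
Proof.
move=> hp YA g0 Yg; apply/eqP; apply: contraTT (fsubset_leq_card YA) => Y0.
by rewrite -ltnNge (lt_pG_card_periodic hp g0 Y0 Yg).
Qed.

Definition dysonA A B e := A `|` translate B e.
Definition dysonB A B e := [fset b in B | b + e \in A].

Lemma dysonBE A B e b : (b \in dysonB A B e) = (b \in B) && (b + e \in A).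
Proof. by rewrite !inE. Qed.

Lemma dysonB_sub A B e : dysonB A B e `<=` B.
Proof. by apply/fsubsetP => b; rewrite dysonBE => /andP[]. Qed.

Lemma card_dyson A B e : (#|` dysonA A B e| + #|` dysonB A B e| = #|` A| + #|` B|)%N.
Proof.
rewrite -(card_translate B e) -[RHS]cardfsUI; congr (_ + _)%N.
rewrite -(card_translate (dysonB A B e) e); congr #|` _|; apply/fsetP => x.
by rewrite in_fsetI !translateE dysonBE subrK andbC.
Qed.

Lemma sumset_dyson_sub A B e : sumset (dysonA A B e) (dysonB A B e) `<=` sumset A B.
Proof.
apply/fsubsetP => _ /sumsetP[x [b [+ + ->]]]; rewrite dysonBE in_fsetU translateE.
case/orP=> [xA /andP[bB _]|xeB /andP[_ beA]]; first exact: mem_sumset.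
by rewrite addrC -[x](subrK e) addrCA addrC mem_sumset.
Qed.

Theorem cauchy_davenport A B :
  A != fset0 -> B != fset0 -> lt_pG G #|` sumset A B| ->
  (#|` A| + #|` B| <= (#|` sumset A B|).+1)%N.
Proof.
have [m] := ubnP #|` B|; elim: m => // m IHm in A B *; rewrite ltnS => Bm A0 B0 hp.
have AB := leq_card_sumset A B0.
case: (leqP #|` B| 1) => [B1|/fset_two_mem[x [y [xB yB xy]]]]; first by lia.
have [Ayx|/fsubsetPn[z]] := boolP (translate A (y - x) `<=` A).
  by have := lt_pG_card_periodic hp _ A0 Ayx; rewrite subr_eq0 eq_sym xy; lia.
rewrite translateE opprB => zyxA zNA.
pose e := z - y.
have xBe : x \in dysonB A B e by rewrite dysonBE xB addrCA.
have yBe : y \notin dysonB A B e by rewrite dysonBE addrC subrK (negPf zNA) andbF.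
have ltB : (#|` dysonB A B e| < #|` B|)%N.
  by apply: fproper_ltn_card; rewrite fproperE dysonB_sub; apply/fsubsetPn; exists y.
have le_sub := fsubset_leq_card (sumset_dyson_sub A B e).
have := IHm (dysonA A B e) (dysonB A B e) (leq_trans ltB Bm).
rewrite (fsubset_neq0 (fsubsetUl _ _) A0) card_dyson.
have -> : dysonB A B e != fset0 by apply/fset0Pn; exists x.
by move=> /(_ isT isT (lt_pGW hp le_sub)); lia.
Qed.

Lemma sumset_dyson_critical A B e :
  A != fset0 -> dysonB A B e != fset0 ->
  (#|` sumset A B|).+1 = (#|` A| + #|` B|)%N -> lt_pG G #|` sumset A B| ->
  sumset (dysonA A B e) (dysonB A B e) = sumset A B.
Proof.
move=> A0 Be0 crit hp; have sub := sumset_dyson_sub A B e.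
have le_sub := fsubset_leq_card sub.
have Ae0 : dysonA A B e != fset0 := fsubset_neq0 (fsubsetUl _ _) A0.
have := cauchy_davenport Ae0 Be0 (lt_pGW hp le_sub); have := card_dyson A B e.
by move=> cardE CD; apply/eqP; rewrite eqEfcard sub; lia.
Qed.

End Sumsets.

(** * Vosper's theorem *)

Section Progressions.
Variable G : zmodType.
Implicit Types (A Y : {fset G}) (b d e s x : G).

Definition fprog s d k : {fset G} := [fset x in [seq s + d *+ i | i <- iota 0 k]].

Lemma fprogP s d k x :
  reflect (exists2 i, (i < k)%N & x = s + d *+ i) (x \in fprog s d k).
Proof.
rewrite inE; apply: (iffP mapP) => -[i].
  by rewrite mem_iota => /andP[_ ik] ->; exists i.
by move=> ik ->; exists i; rewrite ?mem_iota.
Qed.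

Lemma fprog_progression s d k : is_progression (fprog s d k).
Proof. by exists k, s, d => y; split => /fprogP. Qed.

Lemma translate_fprog s d k e : translate (fprog s d k) e = fprog (s + e) d k.
Proof.
apply/fsetP => x; rewrite translateE.
apply/fprogP/fprogP => -[i ik xi]; exists i => //; first by rewrite addrAC -xi subrK.
by rewrite xi addrAC addrK.
Qed.

Lemma fprogU_translate s d k :
  (0 < k)%N -> fprog s d k `|` translate (fprog s d k) d = fprog s d k.+1.
Proof.
move=> k0; apply/fsetP => x; rewrite in_fsetU translate_fprog.
apply/idP/fprogP => [/orP[/fprogP[i ik ->]|/fprogP[i ik ->]]|[i ik ->]].
- by exists i => //; apply: ltnW.
- by exists i.+1; rewrite // mulrSr addrA addrAC.
case: (ltnP i k) => [ik'|ki]; first by apply/orP; left; apply/fprogP; exists i.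
apply/orP; right; apply/fprogP; exists i.-1; first by lia.
by rewrite addrAC -addrA -mulrSr prednK //; lia.
Qed.

Lemma fprog_periodic s d q : d *+ q = 0 -> translate (fprog s d q) d `<=` fprog s d q.
Proof.
move=> dq; apply/fsubsetP => x; rewrite translateE => /fprogP[i iq xi].
apply/fprogP; case: (ltnP i.+1 q) => [iq'|qi].
  by exists i.+1; rewrite // mulrSr addrA -xi subrK.
exists 0%N; first exact: leq_ltn_trans iq.
have q_eq : q = i.+1 by apply/eqP; rewrite eqn_leq qi iq.
by rewrite q_eq in dq; rewrite mulr0n addr0 -[x](subrK d) xi -addrA -mulrSr dq addr0.
Qed.

Lemma lt_pG_mulrn_neq0 k d q :
  lt_pG G k -> d != 0 -> (0 < q <= k)%N -> d *+ q != 0.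
Proof.
move=> hk d0 /andP[q0 qk]; apply/eqP => dq.
have ne : fprog 0 d q != fset0.
  by apply/fset0Pn; exists (0 + d *+ 0); apply/fprogP; exists 0%N.
have := lt_pG_card_periodic hk d0 ne (fprog_periodic 0 dq).
by rewrite ltnNge card_fseq (leq_trans (size_undup _)) // size_map size_iota.
Qed.

Lemma card_fprog k s d : lt_pG G k -> d != 0 -> #|` fprog s d k.+1| = k.+1.
Proof.
move=> hk d0; rewrite card_fseq undup_id ?size_map ?size_iota //.
rewrite map_inj_in_uniq ?iota_uniq // => i j; rewrite !mem_iota !add0n /= => ik jk /addrI.
have eq_le i' j' : (i' <= j' <= k)%N -> d *+ i' = d *+ j' -> i' = j'.
  move=> /andP[le_ij le_jk] dij.
  have /eqP dji : d *+ (j' - i') = 0.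
    by apply: (addrI (d *+ i')); rewrite -mulrnDr subnKC // addr0.
  apply/eqP; rewrite eqn_leq le_ij leqNgt /=; apply: contraL dji => lt_ij.
  by apply: lt_pG_mulrn_neq0 hk d0 _; lia.
by case: (leqP i j) => [ij /eq_le|/ltnW ji /esym /eq_le /esym]; apply; lia.
Qed.

Lemma fprog_exit A s d : lt_pG G #|` A| -> d != 0 -> exists i, s + d *+ i \notin A.
Proof.
move=> hp d0; apply: NNPP => allA.
have sub : fprog s d (#|` A|).+1 `<=` A.
  apply/fsubsetP => _ /fprogP[i _ ->].
  by apply/negPn/negP => iA; apply: allA; exists i.
by have := fsubset_leq_card sub; rewrite card_fprog // ltnn.
Qed.

(* Walking from the unique s in A \ (A + d) along s, s + d, ... until leaving A
   covers A, since what is left over would be periodic under - d. *)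
Lemma fprog_of_card_translateU A d :
  d != 0 -> #|` A `|` translate A d| = (#|` A|).+1 -> lt_pG G #|` A| ->
  exists s k, A = fprog s d k.
Proof.
move=> d0 cardU hp.
have [s sE] : exists s, A `\` translate A d = [fset s].
  apply/cardfs1P/eqP; have := cardfsUI A (translate A d).
  by have := cardfsID (translate A d) A; rewrite card_translate; lia.
have /fsetDP[sA _] : s \in A `\` translate A d by rewrite sE fset11.
have first_in x : x \in A -> x - d \notin A -> x = s.
  by move=> xA xdA; apply/fset1P; rewrite -sE in_fsetD translateE xdA.
case: (ex_minnP (fprog_exit s hp d0)) => k kNA k_min.
have sP : s \in fprog s d k.
  apply/fprogP; exists 0%N; rewrite ?mulr0n ?addr0 //.
  by move: kNA; case: (k) => //; rewrite mulr0n addr0 sA.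
have progA : fprog s d k `<=` A.
  by apply/fsubsetP => _ /fprogP[i ik ->]; apply: contraT => /k_min; rewrite leqNgt ik.
exists s, k; apply/eqP; rewrite eqEfsubset progA andbT -fsetD_eq0.
apply/eqP/(periodic_subset_eq0 hp (fsubsetDl _ _) (_ : - d != 0)); first by rewrite oppr_eq0.
apply/fsubsetP => x; rewrite translateE opprK => /fsetDP[xdA xdP]; apply/fsetDP; split.
  by apply: contraT => xNA; move: xdP; rewrite (first_in _ xdA) ?addrK // sP.
apply/fprogP => -[i ik xi]; move: xdP xdA; rewrite xi -addrA -mulrSr.
case: (ltnP i.+1 k) => [ik'|ki]; first by move/negP; case; apply/fprogP; exists i.+1.
have -> : i.+1 = k by lia.
by rewrite (negPf kNA).
Qed.

Lemma vosper_pair A b1 b2 :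
  b1 != b2 -> A != fset0 -> #|` sumset A [fset b1; b2]| = (#|` A|).+1 ->
  lt_pG G #|` sumset A [fset b1; b2]| -> is_progression (sumset A [fset b1; b2]).
Proof.
move=> b12 A0 cardAB hp.
have AB : sumset A [fset b1; b2] = translate (A `|` translate A (b2 - b1)) b1.
  by rewrite sumset2 translateU translate_translate subrK.
have hpA : lt_pG G #|` A|.
  by apply: lt_pGW hp (leq_card_sumset _ _); apply/fset0Pn; exists b1; rewrite fset21.
have d0 : b2 - b1 != 0 by rewrite subr_eq0 eq_sym.
have [|s [k Ak]] := fprog_of_card_translateU d0 _ hpA.
  by rewrite -(card_translate _ b1) -AB.
have k0 : (0 < k)%N by case/fset0Pn: A0 => a; rewrite Ak => /fprogP[i ik _]; lia.
by rewrite AB Ak fprogU_translate // translate_fprog; apply: fprog_progression.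
Qed.

End Progressions.

Section Vosper.
Variable G : zmodType.
Implicit Types (A B : {fset G}) (e : G).

Definition mdiff A B : {fset G} :=
  [fset e in sumset A [fset - b | b in B] | translate B e `<=` A].

Lemma mdiffE A B e : B != fset0 -> (e \in mdiff A B) = (translate B e `<=` A).
Proof.
case/fset0Pn=> b bB; rewrite !inE andbC; apply: andb_idr => /fsubsetP BeA.
have -> : e = (b + e) + - b by rewrite addrC addKr.
by rewrite mem_sumset ?in_imfset // BeA // translateE addrK.
Qed.

Lemma sumset_mdiff_sub A B : sumset (mdiff A B) B `<=` A.
Proof.
apply/fsubsetP => _ /sumsetP[e [b [+ bB ->]]]; rewrite inE => /andP[_ /fsubsetP BeA].
by rewrite addrC BeA // translateE addrK.
Qed.

(* A critical pair (A, B) with |B| >= 3 that no e-transform can shrink to a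
   B(e) with 2 <= |B(e)| < |B| yields the smaller such pair (A - B, B). *)
Section SaturatedCriticalPair.
Variables A B : {fset G}.
Hypothesis A2 : (1 < #|` A|)%N.
Hypothesis B3 : (2 < #|` B|)%N.
Hypothesis critical : (#|` sumset A B|).+1 = (#|` A| + #|` B|)%N.
Hypothesis hp : lt_pG G #|` sumset A B|.
Hypothesis saturated : forall e, (1 < #|` dysonB A B e|)%N -> B `<=` dysonB A B e.

Let B0 : B != fset0. Proof. by rewrite -cardfs_gt0; apply: ltn_trans B3. Qed.

Lemma mem_mdiff_two c1 c2 e : c1 \in B -> c2 \in B -> c1 != c2 ->
  c1 + e \in A -> c2 + e \in A -> e \in mdiff A B.
Proof.
move=> c1B c2B c12 c1eA c2eA; rewrite mdiffE //; apply/fsubsetP => x.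
have /saturated /fsubsetP Be : (1 < #|` dysonB A B e|)%N.
  apply: leq_trans (fsubset_leq_card (_ : [fset c1; c2] `<=` _)); first by rewrite cardfs2 c12.
  by apply/fsubsetP => y; rewrite in_fset2 dysonBE => /orP[]/eqP->; apply/andP.
by rewrite translateE => /Be; rewrite dysonBE subrK => /andP[].
Qed.

Lemma translate_capE c1 c2 : c1 \in B -> c2 \in B -> c1 != c2 ->
  translate A c1 `&` translate A c2 = translate (mdiff A B) (c1 + c2).
Proof.
move=> c1B c2B c12; apply/fsetP => x; rewrite in_fsetI !translateE.
have shiftE c c' : c' + (x - (c + c')) = x - c by rewrite addrC opprD addrA subrK.
apply/andP/idP => [[xc1A xc2A]|].
  apply: (mem_mdiff_two c2B c1B); rewrite 1?eq_sym ?shiftE //.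
  by rewrite [c1 + c2]addrC shiftE.
rewrite mdiffE // => /fsubsetP BeA; split.
  by rewrite -(shiftE c1 c2) BeA ?mem_translate.
by rewrite -(shiftE c2 c1) [c2 + c1]addrC BeA ?mem_translate.
Qed.

Lemma card_translateU_mdiff c1 c2 : c1 \in B -> c2 \in B -> c1 != c2 ->
  (#|` translate A c1 `|` translate A c2| + #|` mdiff A B| = #|` A| + #|` A|)%N.
Proof.
move=> c1B c2B c12; rewrite -(card_translate (mdiff A B) (c1 + c2)).
by rewrite -translate_capE // cardfsUI !card_translate.
Qed.

Lemma card_mdiff_lb : (#|` A|.+1 <= #|` mdiff A B| + #|` B|)%N.
Proof.
have [b1 [b2 [b1B b2B b12]]] := fset_two_mem (ltnW B3).
have := card_translateU_mdiff b1B b2B b12.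
have : translate A b1 `|` translate A b2 `<=` sumset A B.
  by rewrite fsubUset !translate_sub_sumset.
by move/fsubset_leq_card; lia.
Qed.

Lemma mdiff_neq0 : mdiff A B != fset0.
Proof.
apply/negP => /eqP F0; have [a1 [a2 [a1A a2A a12]]] := fset_two_mem A2.
have disjB : translate B a1 `&` translate B a2 = fset0.
  have subrDBK (u v w : G) : w - v + (u + v - w) = u by rewrite addrC addrA subrK addrK.
  apply/fsetP => x; rewrite in_fsetI !translateE in_fset0; apply/negP => /andP[xa1B xa2B].
  suff : a1 + a2 - x \in mdiff A B by rewrite F0.
  apply: (mem_mdiff_two xa2B xa1B); first by apply: contraNneq a12 => /addrI /oppr_inj ->.
    by rewrite subrDBK.
  by rewrite (addrC a1) subrDBK.
have := cardfsUI (translate B a1) (translate B a2); rewrite disjB cardfs0 !card_translate.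
have : translate B a1 `|` translate B a2 `<=` sumset A B.
  by rewrite sumsetC fsubUset !translate_sub_sumset.
move/fsubset_leq_card; have := card_mdiff_lb; rewrite F0 cardfs0; lia.
Qed.

Lemma mdiff_critical :
  sumset (mdiff A B) B = A /\ (#|` mdiff A B| + #|` B| = (#|` A|).+1)%N.
Proof.
have FB := sumset_mdiff_sub A B; have le_FB := fsubset_leq_card FB.
have hpF : lt_pG G #|` sumset (mdiff A B) B|.
  exact: lt_pGW hp (leq_trans le_FB (leq_card_sumset _ B0)).
have := cauchy_davenport mdiff_neq0 B0 hpF; have := card_mdiff_lb => lbF CD.
have eqFB : sumset (mdiff A B) B = A.
  by apply/eqP; rewrite eqEfcard FB -ltnS (leq_trans lbF CD).
by split => //; move: CD; rewrite eqFB; lia.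
Qed.

Lemma card_mdiff_gt1 : (1 < #|` mdiff A B|)%N.
Proof.
have [_ cardF] := mdiff_critical.
have [b1 [b2 [b1B b2B b12]]] := fset_two_mem (ltnW B3).
have [b3 b3B /andP[b31 b32]] := fset_mem_neq2 b1 b2 B3.
have eqU : translate A b1 `|` translate A b2 = sumset A B.
  apply/eqP; rewrite eqEfcard fsubUset !translate_sub_sumset //.
  by have := card_translateU_mdiff b1B b2B b12; lia.
have : translate A b3 `<=`
    (translate A b3 `&` translate A b1) `|` (translate A b3 `&` translate A b2).
  by rewrite -fsetIUr eqU fsubsetIidl translate_sub_sumset.
move/fsubset_leq_card; rewrite card_translate !translate_capE //.
have := cardfsUI (translate (mdiff A B) (b3 + b1)) (translate (mdiff A B) (b3 + b2)).
by rewrite !card_translate; lia.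
Qed.

Lemma mdiff_saturated e :
  (1 < #|` dysonB (mdiff A B) B e|)%N -> B `<=` dysonB (mdiff A B) B e.
Proof.
case/fset_two_mem => c1 [c2 [+ + c12]].
rewrite !dysonBE => /andP[c1B c1eF] /andP[c2B c2eF].
apply/fsubsetP => b bB; rewrite dysonBE bB; apply: (mem_mdiff_two c1B c2B c12).
  by rewrite addrCA; move: c1eF; rewrite mdiffE // => /fsubsetP; apply; apply: mem_translate.
by rewrite addrCA; move: c2eF; rewrite mdiffE // => /fsubsetP; apply; apply: mem_translate.
Qed.

Lemma saturated_descent :
  [/\ (1 < #|` mdiff A B|)%N, (#|` mdiff A B| < #|` A|)%N,
      (#|` sumset (mdiff A B) B|).+1 = (#|` mdiff A B| + #|` B|)%N,
      lt_pG G #|` sumset (mdiff A B) B| &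
      forall e, (1 < #|` dysonB (mdiff A B) B e|)%N -> B `<=` dysonB (mdiff A B) B e].
Proof.
have [FB cardF] := mdiff_critical; rewrite FB; split.
- exact: card_mdiff_gt1.
- by lia.
- by lia.
- by apply: lt_pGW hp (leq_card_sumset _ B0).
- exact: mdiff_saturated.
Qed.

End SaturatedCriticalPair.

Lemma critical_pair_unsaturated A B :
  (1 < #|` A|)%N -> (2 < #|` B|)%N -> (#|` sumset A B|).+1 = (#|` A| + #|` B|)%N ->
  lt_pG G #|` sumset A B| ->
  exists e, (1 < #|` dysonB A B e|)%N /\ ~~ (B `<=` dysonB A B e).
Proof.
have [m] := ubnP #|` A|; elim: m => // m IHm in A *; rewrite ltnS => Am A2 B3 crit hp.
apply: NNPP => nsat.
have sat e : (1 < #|` dysonB A B e|)%N -> B `<=` dysonB A B e.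
  by move=> Be; apply/negPn/negP => nBe; apply: nsat; exists e.
have [F2 ltFA critF hpF satF] := saturated_descent A2 B3 crit hp sat.
have [e [/satF Be]] := IHm _ (leq_trans ltFA Am) F2 B3 critF hpF.
by rewrite Be.
Qed.

Theorem vosper A B :
  (1 < #|` A|)%N -> (1 < #|` B|)%N -> (#|` sumset A B|).+1 = (#|` A| + #|` B|)%N ->
  lt_pG G #|` sumset A B| -> is_progression (sumset A B).
Proof.
have [m] := ubnP #|` B|; elim: m => // m IHm in A B *; rewrite ltnS => Bm A2 B2 crit hp.
have A0 : A != fset0 by rewrite -cardfs_gt0 ltnW.
case: (ltnP 2 #|` B|) => [B3|B_le2]; last first.
  have [b1 [b2 [b1B b2B b12]]] := fset_two_mem B2.
  have eqB : B = [fset b1; b2].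
    apply/eqP; rewrite eq_sym eqEfcard cardfs2 b12 B_le2 andbT.
    by apply/fsubsetP => x; rewrite in_fset2 => /orP[]/eqP->.
  rewrite eqB in crit hp *; apply: vosper_pair => //.
  by move: crit; rewrite cardfs2 b12 addn2 => -[].
have [e [Be2 nBe]] := critical_pair_unsaturated A2 B3 crit hp.
have ltB : (#|` dysonB A B e| < #|` B|)%N.
  by apply: fproper_ltn_card; rewrite fproperE dysonB_sub.
have Be0 : dysonB A B e != fset0 by rewrite -cardfs_gt0 ltnW.
have eqS := sumset_dyson_critical A0 Be0 crit hp.
have := card_dyson A B e; have := fsubset_leq_card (fsubsetUl A (translate B e)).
move=> le_A cardE; rewrite -eqS; apply: IHm => //; rewrite ?eqS //.
- exact: leq_trans ltB Bm.
- exact: leq_trans A2 le_A.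
- by lia.
Qed.

End Vosper.

(** * Hall's theorem *)

Section Hall.
Variables I T : choiceType.
Implicit Types (S : I -> {fset T}) (A X Y : {fset I}) (f g : I -> T).

Definition nbhd S X : {fset T} := \bigcup_(a <- X) S a.

Definition hall_condition S A := forall X, X `<=` A -> (#|` X| <= #|` nbhd S X|)%N.

Definition is_matching S A f := {in A &, injective f} /\ {in A, forall a, f a \in S a}.

Lemma nbhdP S X y : reflect (exists2 a, a \in X & y \in S a) (y \in nbhd S X).
Proof.
apply: (iffP idP) => [/bigfcupP[a /andP[aX _] yS]|[a aX yS]]; first by exists a.
by apply/bigfcupP; exists a; rewrite ?aX.
Qed.

Lemma sub_matching S S' A f :
  (forall a, a \in A -> S a `<=` S' a) -> is_matching S A f -> is_matching S' A f.
Proof. by move=> SS' [fi fS]; split=> // a aA; apply: (fsubsetP (SS' a aA)); apply: fS. Qed.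

Lemma matching_glue S A X f g :
  is_matching S X f -> is_matching S (A `\` X) g ->
  (forall a b, a \in X -> b \in A `\` X -> f a != g b) ->
  is_matching S A (fun a => if a \in X then f a else g a).
Proof.
move=> [fi fS] [gi gS] fg; split => [a b aA bA|a aA] /=.
  case: (boolP (a \in X)) => aX; case: (boolP (b \in X)) => bX.
  - exact: fi.
  - by move/eqP; rewrite (negPf (fg a b aX _)) // in_fsetD bX.
  - by move/esym/eqP; rewrite (negPf (fg b a bX _)) // in_fsetD aX.
  - by apply: gi; rewrite in_fsetD ?aX ?bX.
by case: ifP => aX; [apply: fS | apply: gS; rewrite in_fsetD aX].
Qed.

Lemma hall_condition_tight S A X :
  hall_condition S A -> X `<=` A -> (#|` nbhd S X| <= #|` X|)%N ->
  hall_condition (fun a => S a `\` nbhd S X) (A `\` X).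
Proof.
move=> hS XA tight Y YAX; set S' := fun a => _.
have YX0 : Y `&` X = fset0.
  apply/fsetP => a; rewrite in_fsetI in_fset0; apply/negP => /andP[aY aX].
  by have := fsubsetP YAX a aY; rewrite in_fsetD aX.
have := hS (Y `|` X); rewrite fsubUset XA (fsubset_trans YAX (fsubsetDl _ _)) => /(_ isT).
have sub : nbhd S (Y `|` X) `<=` nbhd S' Y `|` nbhd S X.
  apply/fsubsetP => b /nbhdP[a]; rewrite !in_fsetU => /orP[aY|aX] bS; last first.
    by apply/orP; right; apply/nbhdP; exists a.
  rewrite orbC; case: (boolP (b \in nbhd S X)) => //= bNX.
  by apply/nbhdP; exists a; rewrite // in_fsetD bNX.
have := fsubset_leq_card sub; have := cardfsUI (nbhd S' Y) (nbhd S X).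
by have := cardfsUI Y X; rewrite YX0 cardfs0; lia.
Qed.

Lemma hall_condition_slack S A a0 y :
  (forall X, X `<=` A -> X != fset0 -> X != A -> (#|` X| < #|` nbhd S X|)%N) ->
  a0 \in A -> hall_condition (fun a => S a `\ y) (A `\ a0).
Proof.
move=> slack a0A Y YA; set S' := fun a => _.
have [->|Y0] := eqVneq Y fset0; first by rewrite cardfs0.
have YnA : Y != A.
  by apply: contraTneq YA => ->; apply/fsubsetPn; exists a0; rewrite ?in_fsetD1 ?eqxx.
have := slack Y (fsubset_trans YA (fsubsetDl _ _)) Y0 YnA.
have sub : nbhd S Y `<=` y |` nbhd S' Y.
  apply/fsubsetP => b /nbhdP[a aY bS]; rewrite in_fset1U; case: eqVneq => //= bNy.
  by apply/nbhdP; exists a; rewrite // in_fsetD1 bNy.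
have := fsubset_leq_card sub; rewrite cardfsU1.
by have := leq_b1 (y \notin nbhd S' Y); lia.
Qed.

Lemma matching_of_tight S A X f g :
  is_matching S X f -> is_matching (fun a => S a `\` nbhd S X) (A `\` X) g ->
  is_matching S A (fun a => if a \in X then f a else g a).
Proof.
move=> mf mg; apply: (matching_glue mf (sub_matching _ mg)) => [a _|a b aX bAX].
  exact: fsubsetDl.
have /fsetDP[_ gbNX] := mg.2 b bAX; apply: contraNneq gbNX => <-.
by apply/nbhdP; exists a => //; apply: mf.2.
Qed.

Lemma matching_of_slack S A a0 y g :
  y \in S a0 -> is_matching (fun a => S a `\ y) (A `\ a0) g ->
  is_matching S A (fun a => if a \in [fset a0] then y else g a).
Proof.
move=> ya0 mg; apply: (matching_glue _ (sub_matching _ mg)) => [|a _|b c _ cA].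
- by split=> [b c /fset1P-> /fset1P->|b /fset1P->].
- exact: fsubsetDl.
- by have /fsetD1P[gcy _] := mg.2 c cA; rewrite eq_sym.
Qed.

Theorem hall (t0 : T) S A : hall_condition S A -> exists f, is_matching S A f.
Proof.
have [m] := ubnP #|` A|; elim: m => // m IHm in S A *; rewrite ltnS => Am hS.
have [->|A0] := eqVneq A fset0; first by exists (fun=> t0); split=> a; rewrite in_fset0.
have [[X [XA X0 XnA tight]]|slack] :=
  classic (exists X, [/\ X `<=` A, X != fset0, X != A & (#|` nbhd S X| <= #|` X|)%N]).
  have ltX : (#|` X| < #|` A|)%N by rewrite fproper_ltn_card // fproperEneq XnA.
  have ltAX : (#|` A `\` X| < #|` A|)%N.
    by have := fsubset_leq_card XA; move: X0; rewrite cardfsDS // -cardfs_gt0; lia.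
  have [f mf] := IHm S X (leq_trans ltX Am) (fun Y YX => hS Y (fsubset_trans YX XA)).
  have [g mg] := IHm _ _ (leq_trans ltAX Am) (hall_condition_tight hS XA tight).
  by exists (fun a => if a \in X then f a else g a); apply: matching_of_tight.
have [a0 a0A] := fset0Pn _ A0.
have [y ya0] : exists y, y \in S a0.
  have := hS [fset a0]; rewrite fsub1set a0A cardfs1 cardfs_gt0 => /(_ isT) /fset0Pn[y].
  by case/nbhdP => a /fset1P ->; exists y.
have slackS X : X `<=` A -> X != fset0 -> X != A -> (#|` X| < #|` nbhd S X|)%N.
  by move=> XA X0 XnA; rewrite ltnNge; apply/negP => tight; apply: slack; exists X.
have ltA : (#|` A `\ a0| < #|` A|)%N by rewrite (cardfsD1 a0 A) a0A.
have [g mg] := IHm _ _ (leq_trans ltA Am) (hall_condition_slack y slackS a0A).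
by exists (fun a => if a \in [fset a0] then y else g a); apply: matching_of_slack.
Qed.

Lemma matching_update S A f a y :
  is_matching S A f -> a \in A -> y \in S a -> y \notin [fset f z | z in A] ->
  is_matching S A (fun z => if z == a then y else f z) /\
  [fset (if z == a then y else f z) | z in A] = y |` ([fset f z | z in A] `\ f a).
Proof.
move=> [fi fS] aA ya yNI.
have faI z : z \in A -> f z \in [fset f z | z in A] by move=> zA; apply: in_imfset.
split; first split=> [z z' zA z'A|z zA] /=.
- case: eqVneq => [-> {z zA}|za]; case: eqVneq => [->|z'a] //.
  + by move=> yfz'; case/negP: yNI; rewrite yfz' faI.
  + by move=> fzy; case/negP: yNI; rewrite -fzy faI.
  + exact: fi.
- by case: eqVneq => [->|_] //; apply: fS.
apply/fsetP => w; rewrite in_fset1U in_fsetD1; apply/imfsetP/idP => [[z zA ->]|].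
  case: (eqVneq z a) => [_|za]; first by rewrite eqxx.
  by rewrite faI // andbT orbC; apply/orP; left; apply: contra za => /eqP/fi ->.
case/orP=> [/eqP->|/andP[wfa /imfsetP[z zA wfz]]]; first by exists a; rewrite ?eqxx.
by exists z => //; move: wfa; rewrite wfz; case: (eqVneq z a) => [->|]; rewrite ?eqxx.
Qed.

End Hall.

(** * Matroids *)

Section Matroids.
Variables (G : zmodType) (M : matroid_over G).
Hypothesis hM : is_matroid M.
Implicit Types (B I S : {fset G}) (x y : G).

Lemma indep_sub_ground I : indep M I -> I `<=` ground M.
Proof. by case: hM => _ + _ _; apply. Qed.

Lemma indep_leq_card_basis B I : basis M B -> indep M I -> (#|` I| <= #|` B|)%N.
Proof.
case: hM => _ _ _ aug [iB maxB] iI; rewrite leqNgt; apply/negP => ltBI.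
have [x /fsetDP[xI xNB] iBx] := aug B I iB iI ltBI.
exact: maxB x (fsubsetP (indep_sub_ground iI) x xI) xNB iBx.
Qed.

Lemma card_basis n B : has_rank M n -> basis M B -> #|` B| = n.
Proof.
case=> B0 hB0 <- hB; apply/eqP; rewrite eqn_leq.
by rewrite (indep_leq_card_basis hB0 hB.1) (indep_leq_card_basis hB hB0.1).
Qed.

Lemma indep_card_basis n I : has_rank M n -> indep M I -> #|` I| = n -> basis M I.
Proof.
move=> [B hB <-] iI cardI; split => // x xE xNI iIx.
by have := indep_leq_card_basis hB iIx; rewrite cardfsU1 xNI cardI add1n ltnn.
Qed.

Lemma indep_card_le1 I :
  loopless M -> I `<=` ground M -> (#|` I| <= 1)%N -> indep M I.
Proof.
move=> lM IE; rewrite leq_eqVlt ltnS leqn0 cardfs_eq0 => /orP[/cardfs1P[x eqI]|/eqP->].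
  by rewrite eqI; apply: lM; rewrite -fsub1set -eqI.
by case: hM.
Qed.

Lemma basis_dual B : basis M B -> basis (dual M) (ground M `\` B).
Proof.
move=> hB; split.
  by split; [exact: fsubsetDl | exists B => //; apply/fdisjointP => x /fsetDP[]].
move=> z zE; rewrite in_fsetD zE andbT negbK => zB [_ [B' hB' disjB']].
have sub : B' `<=` B `\ z.
  apply/fsubsetP => b bB'; have := fdisjointP_sym disjB' b bB'.
  rewrite in_fset1U in_fsetD (fsubsetP (indep_sub_ground hB'.1) b bB') andbT negb_or negbK.
  by case/andP=> bz bB; rewrite in_fsetD1 bz.
have := fsubset_leq_card sub; have := indep_leq_card_basis hB' hB.1.
by rewrite (cardfsD1 z B) zB; lia.
Qed.

Lemma rank_gt1_of_nonbasis n I :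
  loopless M -> has_rank M n -> ~ basis M I -> I `<=` ground M -> #|` I| = n ->
  (1 < n)%N.
Proof.
move=> lM hr nbI IE cI; rewrite ltnNge; apply/negP => n1; apply: nbI.
by apply: (indep_card_basis hr) => //; apply: indep_card_le1 => //; lia.
Qed.

Lemma rank_lt_card_ground n I :
  has_rank M n -> ~ basis M I -> I `<=` ground M -> #|` I| = n ->
  (n < #|` ground M|)%N.
Proof.
move=> hr nbI IE cI; rewrite ltn_neqAle -cI fsubset_leq_card // andbT.
apply/negP => /eqP cardE; have [B hB cB] := hr.
have eqB : B = ground M.
  by apply/eqP; rewrite eqEfcard (indep_sub_ground hB.1) -cardE cI cB /=.
have eqI : I = ground M by apply/eqP; rewrite eqEfcard IE cardE leqnn.
by apply: nbI; rewrite eqI -eqB.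
Qed.

(* The (n+1)-set S + x + y contains a basis: its complement is independent in
   the paving dual, hence avoids some basis. *)
Lemma sparse_paving_exchange n S x y :
  sparse_paving M -> has_rank M n -> (0 < n)%N ->
  S `<=` ground M -> #|` S| = n.-1 -> x \in ground M -> y \in ground M ->
  x \notin S -> y \notin S -> x != y -> ~ basis M (x |` S) -> basis M (y |` S).
Proof.
move=> [pM pD] hr n0 SE cS xE yE xNS yNS xy nbx.
have [_ _ _ aug] := hM; have iS := pM n hr S SE cS.
have [B0 hB0 cB0] := hr; have B0E := indep_sub_ground hB0.1.
have hrD : has_rank (dual M) #|` ground M `\` B0|.
  by exists (ground M `\` B0); first exact: basis_dual.
pose T := x |` (y |` S).
have TE : T `<=` ground M by rewrite !fsubUset !fsub1set xE yE SE.
have cT : #|` T| = n.+1 by rewrite !cardfsU1 in_fset1U negb_or xy xNS yNS cS; lia.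
have [|_ [B hB disjB]] := pD _ hrD (ground M `\` T) (fsubsetDl _ _).
  by rewrite !cardfsDS // cT cB0; have := fsubset_leq_card TE; lia.
have BT : B `<=` T.
  apply/fsubsetP => b bB; have := fdisjointP_sym disjB b bB.
  by rewrite in_fsetD (fsubsetP (indep_sub_ground hB.1) b bB) andbT negbK.
have [|z /fsetDP[zB zNS] iSz] := aug S B iS hB.1.
  by rewrite (card_basis hr hB) cS; lia.
have bSz : basis M (z |` S).
  by apply: indep_card_basis hr iSz _; rewrite cardfsU1 zNS cS; lia.
have := fsubsetP BT z zB; rewrite !in_fset1U (negPf zNS) orbF.
by case/orP => /eqP zE; [case: nbx; rewrite -zE | rewrite -zE].
Qed.

End Matroids.

(** * Matching bases *)

Section Matching.
Variables (G : zmodType) (M N : matroid_over G) (n : nat).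
Hypothesis hcase :
  [\/ ((#|` ground M|.+1 < #|` ground N|)%N /\ lt_pG G #|` ground M|),
      [/\ ~ is_progression (ground M), finite_group G,
          (#|` ground M|.+1 = #|` ground N|)%N & lt_pG G #|` ground N|],
      [/\ ~ is_progression (ground M) /\ ~ is_semi_progression (ground M),
          finite_group G, #|` ground M| = #|` ground N| & lt_pG G #|` ground N|]
    | (#|` ground M| + n + 1 < #|` ground N|)%N].

Lemma no_large_sumset_in_ground X B :
  X != fset0 -> B != fset0 -> sumset X B `<=` ground M -> (#|` X| <= n)%N ->
  (#|` ground N| < #|` X| + #|` B|)%N ->
  ((#|` X| + #|` B| = (#|` ground N|).+1)%N -> (1 < #|` X|)%N /\ (1 < #|` B|)%N) ->
  False.
Proof.
move=> X0 B0 XBE Xn large crit2; have cXB := fsubset_leq_card XBE.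
case: hcase => [[ltMN hp]|[_ _ eqMN hp]|[[nprog _] _ eqMN hp]|ltMN].
- by have := cauchy_davenport X0 B0 (lt_pGW hp cXB); lia.
- have le_N : (#|` sumset X B| <= #|` ground N|)%N by lia.
  by have := cauchy_davenport X0 B0 (lt_pGW hp le_N); lia.
- have le_N : (#|` sumset X B| <= #|` ground N|)%N by lia.
  have CD := cauchy_davenport X0 B0 (lt_pGW hp le_N).
  have eqXB : sumset X B = ground M by apply/eqP; rewrite eqEfcard XBE; lia.
  have [|X2 B2] := crit2; first by lia.
  by apply: nprog; rewrite -eqXB; apply: vosper => //; rewrite eqXB ?eqMN //; lia.
- by have := leq_card_sumset B X0; rewrite sumsetC; lia.
Qed.

Definition partners (a : G) : {fset G} :=
  [fset b in ground N | a + b \notin ground M].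

Lemma partnersE a b : (b \in partners a) = (b \in ground N) && (a + b \notin ground M).
Proof. by rewrite !inE. Qed.

Lemma sumset_compl_nbhd X :
  X `<=` ground M -> sumset X (0 |` (ground N `\` nbhd partners X)) `<=` ground M.
Proof.
move=> /fsubsetP XE; apply/fsubsetP => _ /sumsetP[x [b [xX + ->]]].
rewrite in_fset1U => /orP[/eqP->|/fsetDP[bE bNX]]; first by rewrite addr0 XE.
by apply: contraR bNX => xbNM; apply/nbhdP; exists x; rewrite // partnersE bE.
Qed.

Hypotheses (hM : is_matroid M) (hN : is_matroid N) (lN : loopless N).
Hypotheses (spN : sparse_paving N) (hrM : has_rank M n) (hrN : has_rank N n).
Hypothesis N0 : 0 \notin ground N.

Lemma card_zero_compl Y :
  Y `<=` ground N -> #|` 0 |` (ground N `\` Y)| = (#|` ground N| - #|` Y|).+1.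
Proof. by move=> YN; rewrite cardfsU1 in_fsetD (negPf N0) andbF cardfsDS. Qed.

Lemma hall_condition_partners A : basis M A -> hall_condition partners A.
Proof.
move=> hA X XA; rewrite leqNgt; apply/negP => ltXN.
have NE : nbhd partners X `<=` ground N.
  by apply/fsubsetP => b /nbhdP[a _]; rewrite partnersE => /andP[].
have := fsubset_leq_card NE; have := fsubset_leq_card XA.
rewrite (card_basis hM hrM hA) => Xn NXN.
apply: (no_large_sumset_in_ground (X := X) (B := 0 |` (ground N `\` nbhd partners X))).
- by rewrite -cardfs_gt0; lia.
- by apply/fset0Pn; exists 0; rewrite fset1U1.
- exact/sumset_compl_nbhd/(fsubset_trans XA)/(indep_sub_ground hM hA.1).
- exact: Xn.
- by rewrite card_zero_compl //; lia.
- by rewrite card_zero_compl //; lia.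
Qed.

Lemma basis_matched_of_matching A f :
  is_matching partners A f -> basis_matched M A [fset f a | a in A].
Proof.
by move=> [fi fS]; exists f; split => // a /fS; rewrite partnersE => /andP[].
Qed.

Lemma matching_image A f : basis M A -> is_matching partners A f ->
  #|` [fset f a | a in A]| = n /\ [fset f a | a in A] `<=` ground N.
Proof.
move=> hA [fi fS]; rewrite card_in_imfset // (card_basis hM hrM hA); split => //.
by apply/fsubsetP => _ /imfsetP[a /fS + ->]; rewrite partnersE => /andP[].
Qed.

Lemma exists_partner_outside_image A f :
  basis M A -> is_matching partners A f -> ~ basis N [fset f a | a in A] ->
  exists a y, [/\ a \in A, y \in partners a & y \notin [fset f a | a in A]].
Proof.
move=> hA mf nbI; set I := [fset f a | a in A].
have [cI IE] := matching_image hA mf; have cA := card_basis hM hrM hA.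
have n2 := rank_gt1_of_nonbasis hN lN hrN nbI IE cI.
have ltnN := rank_lt_card_ground hN hrN nbI IE cI.
apply: NNPP => noout.
have sub : 0 |` (ground N `\` I) `<=` 0 |` (ground N `\` nbhd partners A).
  apply/fsetUS/fsetDS/fsubsetP => y /nbhdP[a aA ya].
  by apply/negPn/negP => yNI; apply: noout; exists a, y.
apply: (no_large_sumset_in_ground (X := A) (B := 0 |` (ground N `\` I))).
- by rewrite -cardfs_gt0; lia.
- by apply/fset0Pn; exists 0; rewrite fset1U1.
- apply: fsubset_trans (sumsetS (fsubset_refl A) sub) _.
  exact/sumset_compl_nbhd/(indep_sub_ground hM hA.1).
- by rewrite cA.
- by rewrite card_zero_compl // cI; lia.
- by rewrite card_zero_compl // cI; lia.
Qed.

Lemma matched_exchange A f a y :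
  basis M A -> is_matching partners A f -> ~ basis N [fset f a | a in A] ->
  a \in A -> y \in partners a -> y \notin [fset f a | a in A] ->
  exists2 B, basis N B & basis_matched M A B.
Proof.
move=> hA mf nbI aA ya yNI; set I := [fset f a | a in A].
have [cI IE] := matching_image hA mf.
have n2 := rank_gt1_of_nonbasis hN lN hrN nbI IE cI.
have [mg img] := matching_update mf aA ya yNI.
exists (y |` (I `\ f a)); last by rewrite -img; apply: basis_matched_of_matching.
have faI : f a \in I by apply: in_imfset.
have yE : y \in ground N by move: ya; rewrite partnersE => /andP[].
apply: (sparse_paving_exchange hN spN hrN _ _ _ (fsubsetP IE _ faI) yE _ _ _).
- exact: ltnW n2.
- exact: fsubset_trans (fsubsetDl _ _) IE.
- by move: cI; rewrite (cardfsD1 (f a)) faI add1n => <-.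
- by rewrite fsetD11.
- by rewrite in_fsetD1 negb_and yNI orbT.
- by apply: contraNneq yNI => <-.
- by rewrite fsetD1K.
Qed.

End Matching.

Theorem theorem2p3 (G : zmodType) (M N : matroid_over G) (n : nat) :
  is_matroid M -> loopless M ->
  is_matroid N -> loopless N -> sparse_paving N ->
  has_rank M n -> has_rank N n ->
  (0 : G) \notin ground N ->
  [\/ ((#|` ground M|.+1 < #|` ground N|)%N /\ lt_pG G #|` ground M|),
      [/\ ~ is_progression (ground M), finite_group G,
          (#|` ground M|.+1 = #|` ground N|)%N & lt_pG G #|` ground N|],
      [/\ ~ is_progression (ground M) /\ ~ is_semi_progression (ground M),
          finite_group G, #|` ground M| = #|` ground N| & lt_pG G #|` ground N|]
    | (#|` ground M| + n + 1 < #|` ground N|)%N] ->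
  matched M N.
Proof.
(* Neither [loopless M] nor [finite_group G] nor the semi-progression clause
   of case (3) is needed. *)
move=> hM _ hN lN spN hrM hrN N0 hcase A hA.
have [f mf] := hall 0 (hall_condition_partners hcase hM hrM N0 hA).
have [bI|nbI] := classic (basis N [fset f a | a in A]).
  by exists [fset f a | a in A]; last exact: (basis_matched_of_matching mf).
have [a [y [aA ya yNI]]] :=
  exists_partner_outside_image hcase hM hN lN hrM hrN N0 hA mf nbI.
exact: (matched_exchange hM hN lN spN hrM hrN hA mf nbI aA ya yNI).
Qed.
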